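(* Let $M$ be a matroid on a finite set $E$, let $\mathcal{C}$ be a family of non-spanning circuits of $M$, and let $N$ be the free elevation of $M$. Suppose every cyclic flat of $M$ is a union of circuits in $\mathcal{C}$. Then every cyclic flat of $N$ is a union of circuits in $\mathcal{C}$.
   Context: A cyclic set is a union of circuits; $\emptyset$ counts as cyclic. $M$ is the truncation of $N$ if $r_N(E)=r_M(E)+1$ and $r_M(X)=\min\{r_N(X),r_M(E)\}$ for all $X$. The free erection of $M$ is the maximum, in the weak order, of the set consisting of $M$ and all $N$ whose truncation is $M$. The free elevation of $M$ is obtained by repeatedly taking non-trivial free erections until a matroid with no non-trivial erection is reached. *)

From mathcomp Require Import all_boot.
Set Implicit Arguments. Unset Strict Implicit. Unset Printing Implicit Defensive.

Definition rankfun (E : finType) := {ffun {set E} -> nat}.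

Definition is_matroid (E : finType) (r : rankfun E) : Prop :=
  [/\ forall X : {set E}, r X <= #|X|,
      forall X Y : {set E}, X \subset Y -> r X <= r Y
    & forall X Y : {set E}, r (X :|: Y) + r (X :&: Y) <= r X + r Y].

Definition dependent (E : finType) (r : rankfun E) (X : {set E}) : bool :=
  r X < #|X|.

Definition circuit (E : finType) (r : rankfun E) (C : {set E}) : bool :=
  dependent r C && [forall D : {set E}, (D \proper C) ==> ~~ dependent r D].

Definition flat (E : finType) (r : rankfun E) (F : {set E}) : bool :=
  [forall e : E, (e \notin F) ==> (r F < r (e |: F))].

(* cyclic set = union of circuits (the empty union gives the empty set) *)
Definition union_of (E : finType) (Cs : {set {set E}}) (X : {set E}) : Prop :=
  exists D : {set {set E}}, D \subset Cs /\ X = \bigcup_(C in D) C.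

Definition cyclic (E : finType) (r : rankfun E) (X : {set E}) : Prop :=
  union_of [set C | circuit r C] X.

Definition cyclic_flat (E : finType) (r : rankfun E) (F : {set E}) : Prop :=
  flat r F /\ cyclic r F.

Definition is_truncation (E : finType) (M N : rankfun E) : Prop :=
  N [set: E] = (M [set: E]).+1 /\
  forall X : {set E}, M X = minn (N X) (M [set: E]).

(* weak order: M <= N iff r_M(X) <= r_N(X) for all X
   (every independent set of M is independent in N) *)
Definition weak_le (E : finType) (M N : rankfun E) : Prop :=
  forall X : {set E}, M X <= N X.

Definition is_erection (E : finType) (M N : rankfun E) : Prop :=
  is_matroid N /\ (N = M \/ is_truncation M N).

Definition nontrivial_erection (E : finType) (M N : rankfun E) : Prop :=
  is_matroid N /\ is_truncation M N.

Definition is_free_erection (E : finType) (M N : rankfun E) : Prop :=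
  is_erection M N /\ forall N', is_erection M N' -> weak_le N' N.

Inductive free_elevation (E : finType) : rankfun E -> rankfun E -> Prop :=
  | fe_stop (M : rankfun E) :
      (forall N, ~ nontrivial_erection M N) -> free_elevation M M
  | fe_step (M M' N : rankfun E) :
      is_free_erection M M' -> M' <> M -> free_elevation M' N ->
      free_elevation M N.

(* Along the elevation it suffices to treat one free erection N of M.
   Non-spanning circuits of M remain circuits of N, so it is enough to place every
   element e of a cyclic flat F of N in a cyclic flat of M contained in F.  If e is
   spanned in N by some A inside F of rank below r(M), then cl_M(A) = cl_N(A) lies
   in F, and the union of the circuits inside cl_M(A) is such a cyclic flat; if F = E, use cl_M(E - e) = E.  What is left is a cyclic
   hyperplane F of N in which e is spanned by no small subset.  Raising by one the
   rank of the sets X inside F with e in X and r_N(X - e) = r_N(F) then yields a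
   matroid that is still an erection of M but exceeds N at F, contradicting the
   maximality of the free erection. *)

From mathcomp Require Import all_boot zify.
Set Implicit Arguments. Unset Strict Implicit. Unset Printing Implicit Defensive.

Lemma dependent_circuit (E : finType) (r : rankfun E) (X : {set E}) :
  dependent r X -> exists2 C, circuit r C & C \subset X.
Proof.
case/minset_exists => C /minsetP[depC minC] sCX; exists C => //.
apply/andP; split=> //; apply/forallP => D; apply/implyP => ltDC.
apply/negP => /minC/(_ (proper_sub ltDC)) eqDC.
by move: ltDC; rewrite eqDC properxx.
Qed.

Definition cl (E : finType) (r : rankfun E) (A : {set E}) : {set E} :=
  [set x | r (x |: A) == r A].

Definition cyclic_part (E : finType) (r : rankfun E) (F : {set E}) : {set E} :=
  \bigcup_(C | circuit r C && (C \subset F)) C.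

Section MatroidRank.

Variables (E : finType) (r : rankfun E).
Hypothesis matroid_r : is_matroid r.
Implicit Types (x e : E) (A C F S X Y U I : {set E}).

Lemma rank_le_card X : r X <= #|X|.
Proof. by case: matroid_r. Qed.

Lemma rankS X Y : X \subset Y -> r X <= r Y.
Proof. by case: matroid_r => _ + _; apply. Qed.

Lemma rank_submod X Y : r (X :|: Y) + r (X :&: Y) <= r X + r Y.
Proof. by case: matroid_r. Qed.

Lemma rank_submod_sub X Y U I :
  U \subset X :|: Y -> I \subset X :&: Y -> r U + r I <= r X + r Y.
Proof.
move=> /rankS sU /rankS sI; have := rank_submod X Y; lia.
Qed.

Lemma rank_le_top X : r X <= r setT.
Proof. exact/rankS/subsetT. Qed.

Lemma rankU1_ge x X : r X <= r (x |: X).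
Proof. exact/rankS/subsetUr. Qed.

Lemma rankU1_le x X : r (x |: X) <= (r X).+1.
Proof.
have := rank_submod [set x] X; have := rank_le_card [set x]; rewrite cards1; lia.
Qed.

Lemma in_cl x A : (x \in cl r A) = (r (x |: A) == r A).
Proof. by rewrite inE. Qed.

Lemma rankU1_notin_cl x A : x \notin cl r A -> r (x |: A) = (r A).+1.
Proof.
rewrite in_cl => /eqP; have := rankU1_ge x A; have := rankU1_le x A; lia.
Qed.

Lemma subset_cl A : A \subset cl r A.
Proof. by apply/subsetP => x xA; rewrite in_cl (setUidPr _) ?sub1set. Qed.

Lemma rank_setU_cl A S : S \subset cl r A -> r (A :|: S) = r A.
Proof.
have [n] := ubnP #|S|; elim: n S => // n IH S ltSn sSA.
case: (set_0Vmem S) => [-> | [x xS]]; first by rewrite setU0.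
have xA : r (x |: A) = r A by apply/eqP; rewrite -in_cl (subsetP sSA).
have rAS : r (A :|: S :\ x) = r A.
  apply: IH; last exact: subset_trans (subsetDl _ _) sSA.
  by rewrite (cardsD1 x S) xS in ltSn.
apply/eqP; rewrite eqn_leq (rankS (subsetUl A S)) andbT.
have := @rank_submod_sub (A :|: S :\ x) (x |: A) (A :|: S) A.
rewrite rAS xA leq_add2r; apply; last by rewrite subsetI subsetUl subsetUr.
apply/subsetP => y; rewrite !inE.
by case: (y =P x) => [->|]; rewrite ?eqxx ?orbT //= => _ ->.
Qed.

Lemma rank_cl A : r (cl r A) = r A.
Proof. by rewrite -{1}(setUidPr (subset_cl A)) rank_setU_cl. Qed.

Lemma flat_cl A : flat r (cl r A).
Proof.
apply/forallP => x; apply/implyP => /rankU1_notin_cl rxA.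
by rewrite rank_cl -ltnS -rxA ltnS rankS ?setUS ?subset_cl.
Qed.

Lemma cl_sub_flat A F : flat r F -> A \subset F -> cl r A \subset F.
Proof.
move=> /forallP flatF sAF; apply/subsetP => x; rewrite in_cl => /eqP xA.
apply/negPn/negP => xF; have := implyP (flatF x) xF; apply/negP; rewrite -leqNgt.
have := @rank_submod_sub F (x |: A) (x |: F) A; rewrite xA leq_add2r; apply.
  by rewrite setUCA (setUidPl sAF).
by rewrite subsetI sAF subsetUr.
Qed.

Lemma flat_setT F : flat r F -> r setT <= r F -> F = setT.
Proof.
move=> /forallP flatF rF; apply/setP => x; rewrite in_setT; apply/negPn/negP => xF.
by have := implyP (flatF x) xF; rewrite ltnNge (leq_trans (rank_le_top _) rF).
Qed.

Lemma flat_rankU1 A F x :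
  flat r F -> A \subset F -> x \notin F -> r (x |: A) = (r A).+1.
Proof.
move=> flatF sAF xF; apply: rankU1_notin_cl.
by apply: contra xF; apply/subsetP/cl_sub_flat.
Qed.

Lemma circuit_cl C x Y :
  circuit r C -> x \in C -> C :\ x \subset Y -> x \in cl r Y.
Proof.
case/andP => depC /forallP indC xC sCY; rewrite in_cl eqn_leq rankU1_ge andbT.
have := implyP (indC (C :\ x)) (properD1 xC); rewrite /dependent -leqNgt => indCx.
have rC : r C <= r (C :\ x).
  by move: depC; rewrite /dependent (cardsD1 x C) xC add1n ltnS => /leq_trans; apply.
have := @rank_submod_sub Y C (x |: Y) (C :\ x).
rewrite setUC setUS ?sub1set // subsetI sCY subsetDl => /(_ isT isT); lia.
Qed.

Lemma cl_circuit A e :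
  e \notin A -> e \in cl r A -> exists C, [/\ circuit r C, e \in C & C \subset e |: A].
Proof.
move=> eA eclA; pose P := [pred B : {set E} | (B \subset A) && (e \in cl r B)].
have PA : P A by rewrite /= subxx eclA.
(* A minimal B spanning e is as wanted: a circuit inside B would let one drop an
   element of B and keep e spanned. *)
have [B /minsetP[/andP[sBA eclB] minB] _] := minset_exists PA.
have eB : e \notin B := contra (subsetP sBA e) eA.
have [|C circC sCeB] := @dependent_circuit _ r (e |: B).
  by move: eclB; rewrite /dependent cardsU1 eB in_cl => /eqP->; rewrite ltnS rank_le_card.
exists C; split => //; last exact: subset_trans sCeB (setUS _ sBA).
apply: contraT => eC; have sCB : C \subset B by rewrite -(setU1K eB) subsetD1 sCeB.
have [y yC] : {y | y \in C}.
  apply/sigW/set0Pn; rewrite -card_gt0; case/andP: circC => depC _.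
  exact: leq_ltn_trans (leq0n _) depC.
have yB := subsetP sCB y yC.
have ryB : r B = r (B :\ y).
  by apply/eqP; rewrite -{1}(setD1K yB) -in_cl (circuit_cl circC yC) // setSD.
suff /minB/(_ (subsetDl B [set y]))/setP/(_ y) : P (B :\ y) by rewrite !inE eqxx yB.
rewrite /P /= (subset_trans (subsetDl _ _) sBA) in_cl eqn_leq rankU1_ge andbT -ryB.
by move: eclB; rewrite in_cl => /eqP <-; apply/rankS/setUS/subsetDl.
Qed.

Lemma cyclic_part_sub F : cyclic_part r F \subset F.
Proof. by apply/bigcupsP => C /andP[]. Qed.

Lemma mem_cyclic_part F C x :
  circuit r C -> C \subset F -> x \in C -> x \in cyclic_part r F.
Proof. by move=> circC sCF xC; apply/bigcupP; exists C; rewrite ?circC. Qed.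

Lemma cyclic_flat_cyclic_part F : flat r F -> cyclic_flat r (cyclic_part r F).
Proof.
move=> flatF; split; last first.
  exists [set C | circuit r C && (C \subset F)]; split.
    by apply/subsetP => C; rewrite !inE => /andP[].
  by apply: eq_bigl => C; rewrite inE.
apply/forallP => x; apply/implyP => xG; rewrite ltnNge; apply/negP => rxG.
have xclG : x \in cl r (cyclic_part r F) by rewrite in_cl eqn_leq rxG rankU1_ge.
have [C [circC xC sCxG]] := cl_circuit xG xclG.
have sCxF : C :\ x \subset F.
  by rewrite subDset (subset_trans sCxG) ?setUS ?cyclic_part_sub.
have xF : x \in F.
  exact: subsetP (cl_sub_flat flatF (subxx F)) x (circuit_cl circC xC sCxF).
have sCF : C \subset F by rewrite -(setD1K xC) subUset sub1set xF.
by rewrite (mem_cyclic_part circC sCF xC) in xG.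
Qed.

Lemma cyclic_flat_cl A e : e \notin A -> e \in cl r A ->
  exists G, [/\ cyclic_flat r G, e \in G & G \subset cl r A].
Proof.
move=> eA eclA; have [C [circC eC sCeA]] := cl_circuit eA eclA.
exists (cyclic_part r (cl r A)); split.
- exact/cyclic_flat_cyclic_part/flat_cl.
- apply: mem_cyclic_part circC _ eC.
  by rewrite (subset_trans sCeA) // subUset sub1set eclA subset_cl.
- exact: cyclic_part_sub.
Qed.

End MatroidRank.

Definition raised (E : finType) (r : rankfun E) (F : {set E}) (e : E) (X : {set E}) :=
  [&& e \in X, X \subset F & r (X :\ e) == r F].

Definition raise_flat (E : finType) (r : rankfun E) (F : {set E}) (e : E) : rankfun E :=
  [ffun X => r X + raised r F e X].

Section RaiseFlat.

Variables (E : finType) (N : rankfun E) (F : {set E}) (e : E).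
Hypotheses (matroid_N : is_matroid N) (flatF : flat N F) (rank_topN : N setT = (N F).+1).
Hypothesis e_free :
  forall A : {set E}, A \subset F -> e \notin A -> N A < N F -> e \notin cl N A.
Implicit Types X Y Z : {set E}.

Local Notation raised := (raised N F e).
Local Notation N' := (raise_flat N F e).

Lemma raise_flatE X : N' X = N X + raised X.
Proof. by rewrite ffunE. Qed.

Lemma rank_raised X : raised X -> N X = N F.
Proof.
rewrite /raised => /and3P[_ sXF /eqP rXe]; apply/eqP.
by rewrite eqn_leq (rankS matroid_N sXF) -rXe (rankS matroid_N (subsetDl _ _)).
Qed.

Lemma raise_flat_le_top X : N' X <= (N F).+1.
Proof.
rewrite raise_flatE; case: (boolP (raised X)) => [/rank_raised -> | _]; first by rewrite addn1.
by rewrite addn0 -rank_topN rank_le_top.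
Qed.

Lemma rank_not_raised Z : Z \subset F -> ~~ raised Z -> N Z = N (Z :\ e) + (e \in Z).
Proof.
move=> sZF notZ; have sZeF := subset_trans (subsetDl Z [set e]) sZF.
have [eZ | eZ] := boolP (e \in Z); last by rewrite addn0 (setDidPl _) // disjoint_sym disjoints1.
have ltZe : N (Z :\ e) < N F.
  by rewrite ltn_neqAle (rankS matroid_N sZeF) andbT; move: notZ; rewrite /raised eZ sZF.
have := rankU1_notin_cl matroid_N (e_free sZeF (negbT (setD11 e Z)) ltZe).
by rewrite setD1K // addn1.
Qed.

Lemma raise_flatS X Y : X \subset Y -> N' X <= N' Y.
Proof.
move=> sXY; rewrite !raise_flatE.
have [rX | _] := boolP (raised X).
  2: by rewrite addn0; apply: leq_trans (rankS matroid_N sXY) (leq_addr _ _).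
have [rY | nrY] := boolP (raised Y); first by rewrite leq_add2r rankS.
rewrite (rank_raised rX) addn0 addn1; case/and3P: (rX) => eX sXF /eqP rXe.
have [sYF | /subsetPn[y yY yF]] := boolP (Y \subset F).
  case/negP: nrY; rewrite /raised (subsetP sXY e eX) sYF eqn_leq.
  by rewrite (rankS matroid_N (subset_trans (subsetDl _ _) sYF)) -rXe rankS ?setSD.
rewrite -(rank_raised rX) -(flat_rankU1 matroid_N flatF sXF yF) rankS //.
by rewrite subUset sub1set yY.
Qed.

Lemma raise_flat_submod X Y : N' (X :|: Y) + N' (X :&: Y) <= N' X + N' Y.
Proof.
have [rI | nrI] := boolP (raised (X :&: Y)).
  have := raise_flat_le_top (X :|: Y); have := raise_flatS (subsetIl X Y).
  have := raise_flatS (subsetIr X Y); rewrite !raise_flatE (rank_raised rI) rI; lia.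
have := rank_submod matroid_N X Y; have := raise_flat_le_top (X :|: Y).
have := rankS matroid_N (subsetIl X Y); have := rankS matroid_N (subsetIr X Y).
rewrite !raise_flatE (negbTE nrI).
have [rX | nrX] := boolP (raised X); first by rewrite (rank_raised rX); lia.
have [rY | nrY] := boolP (raised Y); first by rewrite (rank_raised rY); lia.
have [rU | _] := boolP (raised (X :|: Y)); last lia.
have /and3P[eU sUF /eqP rUe] := rU.
have sXF : X \subset F := subset_trans (subsetUl X Y) sUF.
have sYF : Y \subset F := subset_trans (subsetUr X Y) sUF.
have sIF : X :&: Y \subset F := subset_trans (subsetIl X Y) sXF.
rewrite (rank_not_raised sXF nrX) (rank_not_raised sYF nrY) (rank_not_raised sIF nrI).
have := rank_submod matroid_N (X :\ e) (Y :\ e); rewrite -setDUl -setDIl rUe.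
by move: eU; rewrite !inE; case: (e \in X); case: (e \in Y) => //= _; lia.
Qed.

Lemma raise_flat_matroid : is_matroid N'.
Proof.
split; [move=> X | exact: raise_flatS | exact: raise_flat_submod].
rewrite raise_flatE; have [rX | _] := boolP (raised X); last by rewrite addn0 rank_le_card.
case/and3P: (rX) => eX _ /eqP rXe.
by rewrite (rank_raised rX) -rXe (cardsD1 e X) eX addn1 add1n ltnS rank_le_card.
Qed.

Lemma raise_flat_setT : N' setT = N setT.
Proof.
rewrite raise_flatE /raised; case: (boolP (setT \subset F)); rewrite ?andbF ?addn0 //.
by move/(rankS matroid_N); rewrite rank_topN ltnn.
Qed.

Lemma raise_flat_min X : minn (N' X) (N F) = minn (N X) (N F).
Proof.
rewrite raise_flatE; have [/rank_raised-> | _] := boolP (raised X); last by rewrite addn0.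
by rewrite addn1 !minnE subSnn subnn.
Qed.

Lemma raise_flat_self : e \in F -> e \in cl N (F :\ e) -> N' F = (N F).+1.
Proof.
move=> eF; rewrite in_cl setD1K // => /eqP rFe.
by rewrite raise_flatE /raised eF subxx rFe eqxx addn1.
Qed.

End RaiseFlat.

Section Truncation.

Variables (E : finType) (M N : rankfun E).
Hypothesis truncMN : is_truncation M N.
Implicit Types (A C X : {set E}).

Lemma truncation_rank X : M X = minn (N X) (M setT).
Proof. by case: truncMN. Qed.

Lemma truncation_le X : M X <= N X.
Proof. by rewrite truncation_rank geq_minl. Qed.

Lemma truncation_cl A : N A < M setT -> cl M A = cl N A.
Proof.
move=> ltA; apply/setP => x; rewrite !in_cl (truncation_rank A) (truncation_rank (x |: A)).
by apply/eqP/eqP; lia.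
Qed.

Lemma truncation_circuit C :
  circuit M C -> M C < M setT -> circuit N C /\ N C < N setT.
Proof.
move=> /andP[depC /forallP indC] ltC.
have rC : N C = M C by move: ltC; rewrite (truncation_rank C); lia.
split; last by case: truncMN => -> _; rewrite rC ltnW.
apply/andP; split; first by rewrite /dependent rC.
apply/forallP => D; apply/implyP => /(implyP (indC D)).
by rewrite /dependent -!leqNgt => /leq_trans; apply; apply: truncation_le.
Qed.

End Truncation.

Section FreeErection.

Variables (E : finType) (M N : rankfun E).
Hypotheses (matroid_M : is_matroid M) (matroid_N : is_matroid N).
Hypothesis truncMN : is_truncation M N.
Hypothesis maxN : forall N', is_erection M N' -> weak_le N' N.
Implicit Types (A F G : {set E}).

Lemma truncation_cyclic_flat_cover F A e :
  flat N F -> A \subset F -> e \notin A -> N A < M setT -> e \in cl N A ->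
  exists G, [/\ cyclic_flat M G, e \in G & G \subset F].
Proof.
move=> flatF sAF eA ltA; rewrite -(truncation_cl truncMN ltA) => eclA.
have [G [cfG eG sGcl]] := cyclic_flat_cl matroid_M eA eclA.
exists G; split => //; apply: subset_trans sGcl _.
by rewrite (truncation_cl truncMN ltA) cl_sub_flat.
Qed.

Lemma free_erection_hyperplane_cl F e :
  flat N F -> N F = M setT -> e \in F -> e \in cl N (F :\ e) ->
  exists A, [/\ A \subset F, e \notin A, N A < M setT & e \in cl N A].
Proof.
move=> flatF rF eF eclF.
case: (boolP [exists A : {set E}, [&& A \subset F, e \notin A, N A < M setT & e \in cl N A]]).
  by case/existsP => A /and4P[sAF eA ltA eclA]; exists A.
move/existsPn => noA; exfalso.
have e_free A : A \subset F -> e \notin A -> N A < N F -> e \notin cl N A.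
  by rewrite rF => sAF eA ltA; move: (noA A); rewrite sAF eA ltA.
have topN : N setT = (N F).+1 by rewrite rF; case: truncMN.
have truncMN' : is_truncation M (raise_flat N F e).
  split; first by rewrite raise_flat_setT // topN rF.
  by move=> X; rewrite -rF raise_flat_min // rF; case: truncMN => _ ->.
have := maxN (conj (raise_flat_matroid matroid_N flatF topN e_free) (or_intror truncMN')) F.
by rewrite raise_flat_self // ltnn.
Qed.

Lemma free_erection_cyclic_flat_cover F e :
  cyclic_flat N F -> e \in F -> exists G, [/\ cyclic_flat M G, e \in G & G \subset F].
Proof.
move=> [flatF [D [sDcirc defF]]] eF.
have eclF : e \in cl N (F :\ e).
  move: (eF); rewrite [in e \in F]defF => /bigcupP[C CD eC].
  have circC : circuit N C by have := subsetP sDcirc C CD; rewrite inE.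
  apply: (circuit_cl matroid_N circC eC).
  by rewrite setSD // defF (bigcup_sup C).
have eFe : e \notin F :\ e by rewrite !inE eqxx.
have rFe : N (F :\ e) = N F by move: eclF; rewrite in_cl setD1K // => /eqP.
case: (ltngtP (N F) (M setT)) => [ltF | gtF | eqF].
- by apply: truncation_cyclic_flat_cover flatF (subsetDl _ _) eFe _ eclF; rewrite rFe.
- have FT : F = setT by apply: (flat_setT matroid_N flatF); case: truncMN => ->.
  have eclT : e \in cl M (setT :\ e).
    have rTe : N (setT :\ e) = N F by rewrite -FT.
    by rewrite in_cl setD1K // (truncation_rank truncMN (_ :\ e)) rTe (minn_idPr (ltnW gtF)).
  have [G [cfG eG _]] := cyclic_flat_cl matroid_M (negbT (setD11 e setT)) eclT.
  by exists G; rewrite FT subsetT.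
- have [A [sAF eA ltA eclA]] := free_erection_hyperplane_cl flatF eqF eF eclF.
  exact: truncation_cyclic_flat_cover flatF sAF eA ltA eclA.
Qed.

End FreeErection.

Lemma union_of_cover (E : finType) (Cs : {set {set E}}) (F : {set E}) :
  (forall e, e \in F -> exists G, [/\ union_of Cs G, e \in G & G \subset F]) ->
  union_of Cs F.
Proof.
move=> cover; exists [set C in Cs | C \subset F]; split.
  by apply/subsetP => C; rewrite inE => /andP[].
apply/eqP; rewrite eqEsubset; apply/andP; split; last first.
  by apply/bigcupsP => C; rewrite inE => /andP[].
apply/subsetP => e /cover[G [[D [sDCs ->]] /bigcupP[C CD eC] sGF]].
apply/bigcupP; exists C => //; rewrite inE (subsetP sDCs C CD).
exact: subset_trans (bigcup_sup C CD) sGF.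
Qed.

Theorem lemma3p6 (E : finType) (M N : rankfun E) (Cs : {set {set E}}) :
  is_matroid M ->
  (forall C, C \in Cs -> circuit M C /\ M C < M [set: E]) ->
  (forall F, cyclic_flat M F -> union_of Cs F) ->
  free_elevation M N ->
  forall F, cyclic_flat N F -> union_of Cs F.
Proof.
move=> matroid_M circCs cycM elev.
elim: elev matroid_M circCs cycM => {M N}
  [M _ | M M' N [[matroid_M' erM'] maxM'] neqM' _ IH] matroid_M circCs cycM.
  exact: cycM.
have truncMM' : is_truncation M M' by case: erM' => // eqM'; case: neqM'.
apply: IH => // [C /circCs[circC ltC] | F cfF].
  exact: (truncation_circuit truncMM' circC ltC).
apply: union_of_cover => e eF.
have [G [cfG eG sGF]] :=
  free_erection_cyclic_flat_cover matroid_M matroid_M' truncMM' maxM' cfF eF.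
by exists G; split => //; apply: cycM.
Qed.
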